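(* The coarse transition function $\Phi:\mathrm{Conf}\to\mathrm{Conf}$ is the left Kan extension of the fully shifted local transition function $\overline{\delta}:\mathrm{Loc}\to\mathrm{Conf}$ along the projection $\pi_2:\mathrm{Loc}\to\mathrm{Conf}$. That is, $\Phi$ is monotonic, $\overline{\delta}\Rightarrow\Phi\circ\pi_2$, and for every monotonic $F:\mathrm{Conf}\to\mathrm{Conf}$ with $\overline{\delta}\Rightarrow F\circ\pi_2$ we have $\Phi\Rightarrow F$.
   Context: A cellular automaton is given by a group $G$, a neighborhood $N\subseteq G$ (not necessarily finite), a finite set of states $Q$ and a local transition function $\delta:Q^N\to Q$. $\mathrm{Conf}$ is the set of partial functions $G\to Q$; $|c|$ is the domain (support) of $c$; $c\restriction S$ is the restriction of $c$ to $S\cap|c|$. $\mathrm{Conf}$ is partially ordered by $c\preceq c'$ iff for all $g\in|c|$, $g\in|c'|$ and $c(g)=c'(g)$. For $c\in\mathrm{Conf}$, $g\in G$, $c\blacktriangleleft g$ has support $\{h\in G\mid g\cdot h\in|c|\}$ and $(c\blacktriangleleft g)(h)=c(g\cdot h)$. $g\cdot N=\{g\cdot n\mid n\in N\}$, and $\mathrm{int}(S)=\{g\in G\mid g\cdot N\subseteq S\}$. The coarse transition function $\Phi$ maps $c$ to the configuration with support $\mathrm{int}(|c|)$ and values $\Phi(c)(g)=\delta((c\blacktriangleleft g)\restriction N)$. $\mathrm{Loc}=\bigcup_{g\in G}(\{g\}\times Q^{g\cdot N})$ is the poset with trivial order ($(g,c)\preceq(g',c')$ iff $(g,c)=(g',c')$);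 $\overline{\delta}(g,c)$ is the configuration with support $\{g\}$ and value $\delta(c\blacktriangleleft g)$ at $g$; $\pi_2(g,c)=c$. For posets $X,Y$, a map $f:X\to Y$ is monotonic if $x\preceq x'$ implies $f(x)\preceq f(x')$; for monotonic $f,f':X\to Y$, $f\Rightarrow f'$ iff $f(x)\preceq f'(x)$ for all $x\in X$. Given posets $A,B,C$ and monotonic $i:A\to B$, $f:A\to C$, a monotonic $g:B\to C$ is the left Kan extension of $f$ along $i$ if it is the $\Rightarrow$-minimum of $\{h:B\to C \text{ monotonic}\mid f\Rightarrow h\circ i\}$, and the right Kan extension if it is the $\Rightarrow$-maximum of $\{h:B\to C\text{ monotonic}\mid h\circ i\Rightarrow f\}$. *)

From Stdlib Require Import ClassicalEpsilon.
From Stdlib Require Export FinFun.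

Set Implicit Arguments.


Definition monotone {X Y : Type} (leX : X -> X -> Prop) (leY : Y -> Y -> Prop)
  (f : X -> Y) : Prop := forall x x', leX x x' -> leY (f x) (f x').

Definition nat_le {X Y : Type} (leY : Y -> Y -> Prop) (f f' : X -> Y) : Prop :=
  forall x, leY (f x) (f' x).

Definition is_left_Kan {A B C : Type} (leB : B -> B -> Prop) (leC : C -> C -> Prop)
  (i : A -> B) (f : A -> C) (g : B -> C) : Prop :=
  (monotone leB leC g /\ nat_le leC f (fun a => g (i a))) /\
  (forall h : B -> C, monotone leB leC h -> nat_le leC f (fun a => h (i a)) ->
     nat_le leC g h).

(* partial functions G -> Q; support = { g | c g <> None } *)
Definition Conf (G Q : Type) := G -> option Q.

Definition conf_le {G Q : Type} (c c' : Conf G Q) : Prop :=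
  forall g q, c g = Some q -> c' g = Some q.

Definition oget_ne {Q : Type} (o : option Q) : o <> None -> Q :=
  match o return o <> None -> Q with
  | Some q => fun _ => q
  | None => fun H => False_rect Q (H eq_refl)
  end.

Arguments oget_ne {Q} o _.

Section CA.
Variables (G Q : Type) (mul : G -> G -> G) (N : G -> Prop)
          (delta : ({n : G | N n} -> Q) -> Q).

(* value at g of the local rule applied to c: defined iff g.N is contained
   in the support of c (i.e. g in int |c|), and then equal to
   delta ((c <| g) restricted to N). *)
Definition local_value (c : Conf G Q) (g : G) : option Q :=
  match excluded_middle_informative (forall n, N n -> c (mul g n) <> None) with
  | left H => Some (delta (fun n => oget_ne (c (mul g (proj1_sig n)))
                                            (H (proj1_sig n) (proj2_sig n))))
  | right _ => None
  end.

Definition Phi (c : Conf G Q) : Conf G Q := fun g => local_value c g.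

(* Loc: pairs (g, c) with c in Q^{g.N}, encoded as a partial configuration
   whose support is exactly g.N *)
Definition Loc : Type :=
  { p : G * Conf G Q |
    forall x, (snd p) x <> None <-> exists n, N n /\ x = mul (fst p) n }.

Definition loc_le (x y : Loc) : Prop := x = y.

Definition pi2 (x : Loc) : Conf G Q := snd (proj1_sig x).

Definition delta_bar (x : Loc) : Conf G Q :=
  fun h => match excluded_middle_informative (h = fst (proj1_sig x)) with
           | left _ => local_value (snd (proj1_sig x)) (fst (proj1_sig x))
           | right _ => None
           end.

End CA.

Arguments Phi {G Q} mul {N} delta c g.
Arguments Loc G Q mul N : clear implicits.
Arguments pi2 {G Q mul N} x g.
Arguments delta_bar {G Q} mul {N} delta x h.

From Stdlib Require Import FunctionalExtensionality ClassicalEpsilon.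

(* Everything rests on one locality fact: the value of the local rule of c
   at g is defined exactly when g.N lies in the support of c, and then it
   depends only on the restriction of c to g.N (local_value_ext).
   - Monotonicity of Phi: if c <= c' and Phi c is defined at g, then c and
     c' agree on g.N, so Phi c' g = Phi c g.
   - Unit (delta_bar => Phi o pi2): delta_bar (g, c) is Phi c restricted
     to the single cell g.
   - Minimality: if Phi c g = q, restricting c to g.N gives a local pattern
     x in Loc with delta_bar x g = q and pi2 x <= c; for any monotone F with
     delta_bar => F o pi2 this yields F c g = q.
   None of this uses the group structure of G or the finiteness of Q. *)

Section CoarseTransitionKan.

Variables (G Q : Type) (mul : G -> G -> G) (N : G -> Prop)
          (delta : ({n : G | N n} -> Q) -> Q).

Lemma local_value_ext (c c' : Conf G Q) (g : G) :
  (forall n, N n -> c (mul g n) = c' (mul g n)) ->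
  local_value mul N delta c g = local_value mul N delta c' g.
Proof.
  intros E. unfold local_value.
  destruct (excluded_middle_informative
              (forall n, N n -> c (mul g n) <> None)) as [H1|H1];
  destruct (excluded_middle_informative
              (forall n, N n -> c' (mul g n) <> None)) as [H2|H2].
  - do 2 f_equal. apply functional_extensionality. intros [n Hn]; simpl.
    generalize (H1 n Hn) (H2 n Hn). rewrite (E n Hn).
    destruct (c' (mul g n)); intros a b; [reflexivity | now exfalso].
  - exfalso; apply H2; intros n Hn; rewrite <- (E n Hn); auto.
  - exfalso; apply H1; intros n Hn; rewrite (E n Hn); auto.
  - reflexivity.
Qed.

Lemma local_value_defined (c : Conf G Q) (g : G) (q : Q) :
  local_value mul N delta c g = Some q -> forall n, N n -> c (mul g n) <> None.
Proof.
  unfold local_value.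
  destruct (excluded_middle_informative _); [auto | discriminate].
Qed.

Lemma Phi_monotone : monotone (@conf_le G Q) (@conf_le G Q) (Phi mul delta).
Proof.
  intros c c' Hcc' g q Hq. unfold Phi in *.
  rewrite <- Hq. symmetry. apply local_value_ext. intros n Hn.
  pose proof (local_value_defined _ _ _ Hq _ Hn) as Hdef.
  destruct (c (mul g n)) eqn:E; [|congruence].
  symmetry. now apply Hcc'.
Qed.

Lemma delta_bar_le_Phi_pi2 :
  nat_le (@conf_le G Q) (delta_bar mul delta) (fun x => Phi mul delta (pi2 x)).
Proof.
  intros x h q. unfold delta_bar, Phi, pi2.
  destruct (excluded_middle_informative _) as [->|]; congruence.
Qed.

Definition restrict_nbhd (c : Conf G Q) (g : G) : Conf G Q :=
  fun y => match excluded_middle_informative (exists n, N n /\ y = mul g n) with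
           | left _ => c y
           | right _ => None
           end.

Lemma restrict_nbhd_le (c : Conf G Q) (g : G) :
  conf_le (restrict_nbhd c g) c.
Proof.
  intros y r. unfold restrict_nbhd.
  destruct (excluded_middle_informative _); congruence.
Qed.

Lemma restrict_nbhd_support (c : Conf G Q) (g : G) :
  (forall n, N n -> c (mul g n) <> None) ->
  forall y, restrict_nbhd c g y <> None <-> exists n, N n /\ y = mul g n.
Proof.
  intros Hdef y. unfold restrict_nbhd.
  destruct (excluded_middle_informative _) as [Hy|Hy].
  - split; [auto|]. intros _. destruct Hy as [n [Hn ->]]. now apply Hdef.
  - split; [congruence | tauto].
Qed.

Lemma local_value_restrict_nbhd (c : Conf G Q) (g : G) :
  local_value mul N delta (restrict_nbhd c g) g = local_value mul N delta c g.
Proof.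
  apply local_value_ext. intros n Hn. unfold restrict_nbhd.
  destruct (excluded_middle_informative _) as [|Hout]; [reflexivity|].
  exfalso; apply Hout; eauto.
Qed.

(* Every defined value of Phi c is produced by delta_bar on a local pattern
   lying below c; this is what makes Phi the least extension. *)
Lemma Phi_value_from_pattern (c : Conf G Q) (g : G) (q : Q) :
  Phi mul delta c g = Some q ->
  exists x : Loc G Q mul N, conf_le (pi2 x) c /\ delta_bar mul delta x g = Some q.
Proof.
  intros Hq.
  exists (exist _ (g, restrict_nbhd c g)
            (restrict_nbhd_support _ _ (local_value_defined _ _ _ Hq))).
  split; [apply restrict_nbhd_le|].
  unfold delta_bar; simpl.
  destruct (excluded_middle_informative (g = g)) as [_|]; [|congruence].
  now rewrite local_value_restrict_nbhd.
Qed.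

Lemma Phi_least (F : Conf G Q -> Conf G Q) :
  monotone (@conf_le G Q) (@conf_le G Q) F ->
  nat_le (@conf_le G Q) (delta_bar mul delta) (fun x => F (pi2 x)) ->
  nat_le (@conf_le G Q) (Phi mul delta) F.
Proof.
  intros HF Hunit c g q Hq.
  destruct (Phi_value_from_pattern _ _ _ Hq) as [x [Hxc Hx]].
  exact (HF _ _ Hxc g q (Hunit x g q Hx)).
Qed.

End CoarseTransitionKan.

Theorem mainTheorem9
  (G : Type) (mul : G -> G -> G) (one : G) (inv : G -> G)
  (mulA : forall x y z, mul x (mul y z) = mul (mul x y) z)
  (mul1g : forall x, mul one x = x)
  (mulVg : forall x, mul (inv x) x = one)
  (N : G -> Prop)
  (Q : Type) (Qfin : Finite Q)
  (delta : ({n : G | N n} -> Q) -> Q) :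
  is_left_Kan (@conf_le G Q) (@conf_le G Q)
    (@pi2 G Q mul N) (delta_bar mul delta) (Phi mul delta).
Proof.
  split; [split|].
  - exact (@Phi_monotone G Q mul N delta).
  - exact (@delta_bar_le_Phi_pi2 G Q mul N delta).
  - exact (@Phi_least G Q mul N delta).
Qed.
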